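(* If $W=\langle w_1,\ldots,w_n\rangle$ is a weave, then the subtournaments $W-\{w_1,w_2\},\ W-\{w_2,w_3\},\ \ldots,\ W-\{w_{n-1},w_n\}$ are all isomorphic to each other. Furthermore, for any $i,j$ there is an isomorphism $\phi$ from $W-\{w_i,w_{i+1}\}$ to $W-\{w_j,w_{j+1}\}$ such that whenever $\phi(w_k)=w_\ell$, the integers $k$ and $\ell$ have the same parity.
   Context: A tournament is a finite, non-null, loopless directed graph in which for any two distinct vertices $u,v$ there is exactly one edge with both ends in $\{u,v\}$; write $u\to v$ for the edge from $u$ to $v$. $W-X$ denotes the subtournament induced on $V(W)\setminus X$. A weave $\langle w_1,\dots,w_n\rangle$ is a tournament on $w_1,\dots,w_n$ such that: $w_i\to w_j$ whenever $i<j$ and $i,j$ have opposite parity; either $w_i\to w_j$ for all $i<j$ both odd, or $w_j\to w_i$ for all $i<j$ both odd; and either $w_i\to w_j$ for all $i<j$ both even, or $w_j\to w_i$ for all $i<j$ both even. *)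

From mathcomp Require Import all_boot.
Set Implicit Arguments. Unset Strict Implicit. Unset Printing Implicit Defensive.

Definition is_tournament (T : finType) (e : rel T) : Prop :=
  (forall u, ~~ e u u) /\
  (forall u v, u != v -> (e u v (+) e v u)).

(* A weave <w_1,...,w_n>, with w_i represented by the ordinal i-1 : 'I_n.
   (0-based indexing preserves "same/opposite parity" and maps the class of
   odd indices to the class of even ones; the definition is symmetric in the
   two classes.) *)
Definition is_weave (n : nat) (e : rel 'I_n) : Prop :=
  is_tournament e /\
  (forall i j : 'I_n, i < j -> odd i != odd j -> e i j) /\
  ((forall i j : 'I_n, i < j -> ~~ odd i -> ~~ odd j -> e i j) \/
   (forall i j : 'I_n, i < j -> ~~ odd i -> ~~ odd j -> e j i)) /\
  ((forall i j : 'I_n, i < j -> odd i -> odd j -> e i j) \/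
   (forall i j : 'I_n, i < j -> odd i -> odd j -> e j i)).

Definition sub_iso (T : finType) (e : rel T) (A B : {set T}) (phi : T -> T)
  : Prop :=
  {in A, injective phi} /\ phi @: A = B /\
  {in A &, forall x y, e x y = e (phi x) (phi y)}.

Definition del_pair (n : nat) (i : nat) : {set 'I_n} :=
  [set k : 'I_n | (val k != i) && (val k != i.+1)].

(* Deleting two consecutive vertices w_i, w_{i+1} keeps the alternation of
   parities: the r-th remaining vertex (counting from 0) is w_r or w_{r+2},
   which have the same parity as r.  In a weave the direction of the edge
   between two vertices depends only on their order and their parities, so
   the order-preserving bijection between W - {w_i, w_{i+1}} and
   W - {w_j, w_{j+1}} preserves parities and hence is an isomorphism. *)

From mathcomp Require Import all_boot.
From mathcomp Require Import zify.

Set Implicit Arguments.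
Unset Strict Implicit.
Unset Printing Implicit Defensive.

Lemma tournament_edgeC (T : finType) (e : rel T) (x y : T) :
  is_tournament e -> x != y -> e y x = ~~ e x y.
Proof. by case=> _ /(_ x y) tot /tot; case: (e x y); case: (e y x). Qed.

Lemma tournament_uniform_edge (T : finType) (e : rel T) (lt : rel T)
    (P : pred T) :
  is_tournament e -> (forall x y, lt x y -> x != y) ->
  (forall x y, lt x y -> P x -> P y -> e x y) \/
  (forall x y, lt x y -> P x -> P y -> e y x) ->
  forall x y x' y', lt x y -> lt x' y' -> P x -> P y -> P x' -> P y' ->
  e x y = e x' y'.
Proof.
move=> tour lt_neq [fwd | bwd] x y x' y' xy xy' Px Py Px' Py'.
  by rewrite !fwd.
have flip a b : lt a b -> e a b = ~~ e b a.
  by move=> ab; rewrite (tournament_edgeC tour (lt_neq _ _ ab)) negbK.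
by rewrite (flip _ _ xy) (flip _ _ xy') !bwd.
Qed.

Lemma weave_edge n (e : rel 'I_n) (x y x' y' : 'I_n) : is_weave e ->
  x < y -> x' < y' -> odd x = odd x' -> odd y = odd y' -> e x y = e x' y'.
Proof.
case=> tour [cross [even_pairs odd_pairs]] xy xy' ox oy.
pose lt (a b : 'I_n) := a < b.
have lt_neq a b : lt a b -> a != b by rewrite /lt neq_ltn => ->.
have [same | diff] := eqVneq (odd x) (odd y); last first.
  by rewrite !cross // -ox -oy.
case ox_true: (odd x).
- apply: (tournament_uniform_edge (P := fun k : 'I_n => odd k)
           tour lt_neq odd_pairs);
    by rewrite /= -?ox -?oy -?same.
- apply: (tournament_uniform_edge (P := fun k : 'I_n => ~~ odd k)
           tour lt_neq even_pairs);
    by rewrite /= -?ox -?oy -?same ?ox_true.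
Qed.

Lemma weave_iso_of_increasing n (e : rel 'I_n) (A : {set 'I_n})
    (phi : 'I_n -> 'I_n) :
  is_weave e ->
  {in A &, forall x y : 'I_n, x < y -> phi x < phi y} ->
  {in A, forall k, odd (phi k) = odd k} ->
  {in A &, forall x y, e x y = e (phi x) (phi y)}.
Proof.
move=> W incr odd_phi x y xA yA.
have tour := W.1.
have [xy | yx | /val_inj <-] := ltngtP x y.
- by rewrite (weave_edge W xy (incr _ _ xA yA xy)) ?odd_phi.
- have phi_yx := incr _ _ yA xA yx.
  have y_neq_x : y != x by rewrite neq_ltn yx.
  have phi_neq : phi y != phi x by rewrite neq_ltn phi_yx.
  rewrite (tournament_edgeC tour y_neq_x) (tournament_edgeC tour phi_neq).
  by rewrite (weave_edge W yx phi_yx) ?odd_phi.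
- by rewrite !(negbTE (tour.1 _)).
Qed.

(* [skip2 i r] is the r-th natural number outside {i, i+1}.  [relabel i j]
   also sends i, i+1 to j, j+1, so that it is a bijection of nat: [sub_iso]
   asks for injectivity against every vertex, not only those of the domain. *)
Definition skip2 (i r : nat) : nat := if r < i then r else r.+2.
Definition drop2 (i k : nat) : nat := if k < i then k else k - 2.

Definition relabel (i j k : nat) : nat :=
  if k == i then j else if k == i.+1 then j.+1 else skip2 j (drop2 i k).

Lemma skip2K i : cancel (skip2 i) (drop2 i).
Proof.
by move=> r; rewrite /drop2 /skip2; case: (ltnP r i) => ?; case: ltnP; lia.
Qed.

Lemma drop2K i k : k != i -> k != i.+1 -> skip2 i (drop2 i k) = k.
Proof. by rewrite /skip2 /drop2; case: (ltnP k i) => ?; case: ltnP; lia. Qed.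

Lemma skip2_avoid i r : (skip2 i r != i) && (skip2 i r != i.+1).
Proof. by rewrite /skip2; case: ltnP; lia. Qed.

Lemma odd_skip2 i r : odd (skip2 i r) = odd r.
Proof. by rewrite /skip2; case: ifP => //= _; rewrite negbK. Qed.

Lemma ltn_skip2 i : {mono skip2 i : r s / r < s}.
Proof.
by move=> r s; rewrite /skip2; case: (ltnP r i) => ?; case: (ltnP s i); lia.
Qed.

Lemma relabel_out i j k :
  k != i -> k != i.+1 -> relabel i j k = skip2 j (drop2 i k).
Proof. by rewrite /relabel => /negbTE-> /negbTE->. Qed.

Lemma relabelK i j : cancel (relabel i j) (relabel j i).
Proof.
move=> k; have [-> | ki] := eqVneq k i; first by rewrite /relabel !eqxx.
have [-> | ki1] := eqVneq k i.+1.
  by rewrite /relabel (gtn_eqF (ltnSn i)) eqxx (gtn_eqF (ltnSn j)) !eqxx.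
have /andP[kj kj1] := skip2_avoid j (drop2 i k).
by rewrite relabel_out // relabel_out // skip2K drop2K.
Qed.

Lemma relabel_lt n i j k :
  i.+1 < n -> j.+1 < n -> k < n -> relabel i j k < n.
Proof.
move=> lt_i lt_j lt_k; rewrite /relabel.
case: (k =P i) => ki; first lia.
case: (k =P i.+1) => ki1; first lia.
rewrite /skip2 /drop2.
by case: (ltnP k i) => ?; [case: (ltnP k j) | case: (ltnP (k - 2) j)]; lia.
Qed.

Lemma relabel_avoid i j k : k != i -> k != i.+1 ->
  (relabel i j k != j) && (relabel i j k != j.+1).
Proof. by move=> ki ki1; rewrite relabel_out // skip2_avoid. Qed.

Lemma odd_relabel i j k : k != i -> k != i.+1 -> odd (relabel i j k) = odd k.
Proof.
move=> ki ki1.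
by rewrite relabel_out // odd_skip2 -[in RHS](drop2K ki ki1) odd_skip2.
Qed.

Lemma ltn_relabel i j k l : k != i -> k != i.+1 -> l != i -> l != i.+1 ->
  k < l -> relabel i j k < relabel i j l.
Proof.
move=> ki ki1 li li1 kl.
by rewrite !relabel_out // ltn_skip2 -(ltn_skip2 i) !drop2K.
Qed.

Section Relabel.

Variables (n i j : nat).
Hypotheses (lt_i : i.+1 < n) (lt_j : j.+1 < n).

Lemma mem_del_pair a (k : 'I_n) :
  (k \in del_pair n a) = (val k != a) && (val k != a.+1).
Proof. by rewrite inE. Qed.

Definition relabel_ord (a b : nat) (k : 'I_n) : 'I_n :=
  insubd k (relabel a b k).

Lemma val_relabel_ord (k : 'I_n) : val (relabel_ord i j k) = relabel i j k.
Proof. by rewrite val_insubd relabel_lt. Qed.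

Lemma relabel_ord_del_pair (k : 'I_n) :
  k \in del_pair n i -> relabel_ord i j k \in del_pair n j.
Proof.
by rewrite !mem_del_pair val_relabel_ord => /andP[ki ki1]; apply: relabel_avoid.
Qed.

Lemma odd_relabel_ord :
  {in del_pair n i, forall k, odd (relabel_ord i j k) = odd k}.
Proof.
move=> k; rewrite mem_del_pair val_relabel_ord => /andP[ki ki1].
exact: odd_relabel.
Qed.

Lemma relabel_ord_increasing : {in del_pair n i &, forall x y : 'I_n,
  x < y -> relabel_ord i j x < relabel_ord i j y}.
Proof.
move=> x y; rewrite !mem_del_pair !val_relabel_ord.
by move=> /andP[xi xi1] /andP[yi yi1]; apply: ltn_relabel.
Qed.

End Relabel.

Lemma relabel_ordK n i j : i.+1 < n -> j.+1 < n ->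
  cancel (@relabel_ord n i j) (relabel_ord j i).
Proof.
by move=> lt_i lt_j k; apply: val_inj; rewrite !val_relabel_ord // relabelK.
Qed.

Lemma relabel_ord_image n i j : i.+1 < n -> j.+1 < n ->
  relabel_ord i j @: del_pair n i = del_pair n j.
Proof.
move=> lt_i lt_j; apply/setP=> b; apply/imsetP/idP => [[k kA ->] | bB].
  exact: relabel_ord_del_pair.
by exists (relabel_ord j i b); rewrite ?relabel_ord_del_pair ?relabel_ordK.
Qed.

Lemma relabel_ord_sub_iso n (e : rel 'I_n) i j : is_weave e ->
  i.+1 < n -> j.+1 < n ->
  sub_iso e (del_pair n i) (del_pair n j) (relabel_ord i j).
Proof.
move=> W lt_i lt_j; split.
  by move=> x _ y; apply: (can_inj (relabel_ordK lt_i lt_j)).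
split; first exact: relabel_ord_image.
apply: weave_iso_of_increasing W _ (odd_relabel_ord lt_i lt_j).
exact: relabel_ord_increasing.
Qed.

Theorem corollary3p5 (n : nat) (e : rel 'I_n) :
  is_weave e ->
  (forall i j : nat, i.+1 < n -> j.+1 < n ->
     exists phi : 'I_n -> 'I_n, sub_iso e (del_pair n i) (del_pair n j) phi) /\
  (forall i j : nat, i.+1 < n -> j.+1 < n ->
     exists phi : 'I_n -> 'I_n,
       sub_iso e (del_pair n i) (del_pair n j) phi /\
       {in del_pair n i, forall k, odd (phi k) = odd k}).
Proof.
move=> W; split=> i j lt_i lt_j; exists (relabel_ord i j).
  exact: relabel_ord_sub_iso.
split; first exact: relabel_ord_sub_iso.
exact: odd_relabel_ord.
Qed.
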